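(* Let $f_0,f_1$ be finitely supported probability distributions on a connected, locally finite graph $G$, and endow $G$ with the $W_1$-orientation with respect to $(f_0,f_1)$. Then every oriented path on $(G,\to)$ is a geodesic of $G$.
   Context: $d$ is the graph distance. A path of length $n$ is a sequence $\gamma(0),\dots,\gamma(n)$ of vertices with consecutive ones adjacent; $L(\gamma)=n$, $e_0(\gamma)=\gamma(0)$, $e_1(\gamma)=\gamma(n)$; it is a geodesic if $n=d(\gamma(0),\gamma(n))$. A probability distribution is $f:G\to[0,\infty)$ with $\sum_xf(x)=1$. $\Pi_1(f_0,f_1)$ is the set of couplings $\pi$ of $f_0,f_1$ (nonnegative functions on $G\times G$ with marginals $f_0,f_1$) minimizing $\sum d(x,y)\pi(x,y)$; $\mathcal{C}(f_0,f_1)=\{(x,y):\pi(x,y)>0\text{ for some }\pi\in\Pi_1(f_0,f_1)\}$. The $W_1$-orientation with respect to $(f_0,f_1)$: for adjacent $x,y$, $x\to y$ iff there exist a geodesic $\gamma$ with $(e_0(\gamma),e_1(\gamma))\in\mathcal{C}(f_0,f_1)$ and $k\in\{0,\dots,L(\gamma)-1\}$ with $\gamma(k)=x,\gamma(k+1)=y$. An oriented path is a path with $\gamma(i)\to\gamma(i+1)$ for each $i$. *)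

From HB Require Import structures.
From mathcomp Require Import all_boot all_order all_algebra.
From mathcomp Require Import boolp classical_sets functions cardinality reals ereal esum.
Set Implicit Arguments. Unset Strict Implicit. Unset Printing Implicit Defensive.
Import Order.TTheory GRing.Theory Num.Theory.
Local Open Scope classical_set_scope.
Local Open Scope ring_scope.

Section W1.
Variables (V : choiceType) (adj : V -> V -> Prop).

Definition is_path (g : nat -> V) (n : nat) : Prop :=
  forall i, (i < n)%N -> adj (g i) (g i.+1).

Definition simple_graph : Prop :=
  (forall x y, adj x y -> adj y x) /\ (forall x, ~ adj x x).
Definition connected_graph : Prop :=
  forall x y, exists g n, is_path g n /\ g 0%N = x /\ g n = y.
Definition locally_finite : Prop := forall x, finite_set [set y | adj x y].

Definition path_len_between (x y : V) : pred nat :=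
  fun n => `[< exists g, is_path g n /\ g 0%N = x /\ g n = y >].

(* graph distance: least length of a path from x to y (0 if none exists) *)
Definition gdist (x y : V) : nat :=
  match pselect (exists n, path_len_between x y n) with
  | left h => ex_minn h
  | right _ => 0%N
  end.

Definition geodesic (g : nat -> V) (n : nat) : Prop :=
  is_path g n /\ n = gdist (g 0%N) (g n).

Variable R : realType.

Definition prob_distr (f : V -> R) : Prop :=
  (forall x, 0 <= f x) /\ (\esum_(x in [set: V]) (f x)%:E = 1%E).
Definition fin_supp (f : V -> R) : Prop := finite_set [set x | f x != 0].

Definition coupling (f0 f1 : V -> R) (pi : V -> V -> R) : Prop :=
  [/\ forall x y, 0 <= pi x y,
      forall x, \esum_(y in [set: V]) (pi x y)%:E = (f0 x)%:E &
      forall y, \esum_(x in [set: V]) (pi x y)%:E = (f1 y)%:E].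

Definition transport_cost (pi : V -> V -> R) : \bar R :=
  \esum_(p in [set: V * V]) ((gdist p.1 p.2)%:R * pi p.1 p.2)%:E.

Definition optimal_coupling (f0 f1 : V -> R) (pi : V -> V -> R) : Prop :=
  coupling f0 f1 pi /\
  forall pi', coupling f0 f1 pi' -> (transport_cost pi <= transport_cost pi')%E.

Definition W1_support (f0 f1 : V -> R) (x y : V) : Prop :=
  exists pi, optimal_coupling f0 f1 pi /\ 0 < pi x y.

Definition W1_arrow (f0 f1 : V -> R) (x y : V) : Prop :=
  adj x y /\
  exists g n, geodesic g n /\ W1_support f0 f1 (g 0%N) (g n) /\
    exists k, (k < n)%N /\ g k = x /\ g k.+1 = y.

Definition oriented_path (f0 f1 : V -> R) (g : nat -> V) (n : nat) : Prop :=
  is_path g n /\ forall i, (i < n)%N -> W1_arrow f0 f1 (g i) (g i.+1).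

End W1.

From mathcomp Require Import all_boot all_order all_algebra zify ring lra.
From mathcomp Require Import boolp classical_sets cardinality.
From mathcomp Require Import reals ereal esum fsbigop.

(* Each oriented edge (g i, g i.+1) lies on a geodesic from X i to Y i, where
   (X i, Y i) is charged by some optimal coupling P i.  The average of the P i
   is again optimal and charges every (X i, Y i); moving a small mass along the
   cycle (X i, Y i) -> (X (i+1), Y i) keeps it a coupling, so optimality gives
   cyclical monotonicity: sum_i d(X i, Y i) <= sum_i d(X (i+1), Y i).  Since
   d(X i, Y i) = d(X i, g i) + 1 + d(g (i+1), Y i), the left side is
   S + n with S := sum_i (d(X i, g i) + d(g (i+1), Y i)); routing each
   d(X (i+1), Y i) through g (i+1) (through g 0 and g n for the closing index)
   bounds the right side by S + d(g 0, g n).  Hence n <= d(g 0, g n). *)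

Set Implicit Arguments.
Unset Strict Implicit.
Unset Printing Implicit Defensive.

Import Order.TTheory GRing.Theory Num.Theory.
Local Open Scope classical_set_scope.
Local Open Scope ring_scope.

Section GraphDistance.
Variables (V : choiceType) (adj : V -> V -> Prop).

Lemma gdist_min g m : is_path adj g m -> (gdist adj (g 0%N) (g m) <= m)%N.
Proof.
move=> pg; rewrite /gdist; case: pselect => [h|//].
by case: ex_minnP => k _; apply; apply/asboolP; exists g.
Qed.

Lemma gdist_path x y : connected_graph adj ->
  exists g, [/\ is_path adj g (gdist adj x y), g 0%N = x & g (gdist adj x y) = y].
Proof.
move=> conn; rewrite /gdist; case: pselect => [h|nh].
  by case: ex_minnP => k /asboolP [g [pg [g0 gk]]] _; exists g.
have [g [n [pg [g0 gn]]]] := conn x y.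
by case: nh; exists n; apply/asboolP; exists g.
Qed.

Lemma gdist_xx x : gdist adj x x = 0%N.
Proof. by apply/eqP; rewrite -leqn0 (gdist_min (g := fun=> x)). Qed.

Lemma gdist_triangle x y z : connected_graph adj ->
  (gdist adj x z <= gdist adj x y + gdist adj y z)%N.
Proof.
move=> conn.
have [g1 [p1 g10 g1a]] := gdist_path x y conn.
have [g2 [p2 g20 g2b]] := gdist_path y z conn.
set a := gdist adj x y in p1 g1a *; set b := gdist adj y z in p2 g2b *.
pose g i := if (i <= a)%N then g1 i else g2 (i - a)%N.
have gE i : (a <= i)%N -> g i = g2 (i - a)%N.
  rewrite /g => ai; case: ifP => // ia.
  have -> : i = a by apply/eqP; rewrite eqn_leq ia ai.
  by rewrite subnn g1a g20.
have pg : is_path adj g (a + b).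
  move=> i iab; case: (ltnP i a) => ia.
    by rewrite /g ia (ltnW ia); apply: p1.
  by rewrite !gE ?(leq_trans ia) // subSn //; apply: p2; rewrite ltn_subLR.
by have := gdist_min pg; rewrite [g (a + b)]gE ?leq_addr // addKn g2b /g leq0n g10.
Qed.

Lemma gdist_prefix h m k : is_path adj h m -> (k <= m)%N ->
  (gdist adj (h 0%N) (h k) <= k)%N.
Proof. by move=> ph km; apply: gdist_min => i ik; apply: ph (leq_trans ik km). Qed.

Lemma gdist_suffix h m k : is_path adj h m -> (k <= m)%N ->
  (gdist adj (h k) (h m) <= m - k)%N.
Proof.
move=> ph km; have := @gdist_min (fun i => h (k + i)%N) (m - k).
rewrite addn0 subnKC //; apply=> i ik.
by rewrite addnS; apply: ph; rewrite -ltn_subRL.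
Qed.

Lemma sum_gdist_ordS (g : nat -> V) n :
  (\sum_(i < n.+1) gdist adj (g (ordS i)) (g i.+1) = gdist adj (g 0%N) (g n.+1))%N.
Proof.
rewrite big_ord_recr /= big1 => [|i _]; last first.
  by rewrite /= modn_small ?ltnS // gdist_xx.
by rewrite modnn.
Qed.

End GraphDistance.

Section FiniteSums.
Variable R : realType.

Lemma esum_seq (T : choiceType) (h : T -> R) (s : seq T) : uniq s ->
  (forall t, 0 <= h t) -> (forall t, h t != 0 -> t \in s) ->
  \esum_(t in [set: T]) (h t)%:E = (\sum_(t <- s) h t)%:E.
Proof.
move=> s_uniq h_ge0 h_s; rewrite -sumEFin (fsbig_seq _ _ s_uniq) -esum_fset //.
  rewrite [RHS]esum_mkcond; apply: eq_esum => t _; case: ifPn => // ts.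
  by congr _%:E; apply/eqP; apply: contraNT ts => /h_s; rewrite inE.
by move=> t _; rewrite lee_fin.
Qed.

Lemma sum_seq_indicator (T : eqType) (s : seq T) (a : T) (F : T -> R) :
  uniq s -> a \in s -> \sum_(x <- s) (x == a)%:R * F x = F a.
Proof.
move=> s_uniq sa; rewrite (bigD1_seq a) //= eqxx mul1r big1 ?addr0 // => x.
by move=> /negbTE ->; rewrite mul0r.
Qed.

End FiniteSums.

Lemma coupling_neq0 (V : choiceType) (R : realType) (f0 f1 : V -> R) pi x y :
  coupling f0 f1 pi -> pi x y != 0 -> f0 x != 0 /\ f1 y != 0.
Proof.
move=> [pi_ge0 pi_f0 pi_f1] pi_xy.
have pi_gt0 : 0 < pi x y by rewrite lt_def pi_xy pi_ge0.
have le_f0 : ((pi x y)%:E <= (f0 x)%:E)%E.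
  by rewrite -pi_f0; apply: esum_ge; exists [set y]; rewrite ?fsbig_set1.
have le_f1 : ((pi x y)%:E <= (f1 y)%:E)%E.
  by rewrite -pi_f1; apply: esum_ge; exists [set x]; rewrite ?fsbig_set1.
by rewrite !lee_fin in le_f0 le_f1; rewrite !gt_eqF ?(lt_le_trans pi_gt0).
Qed.

(* Couplings of marginals supported in [s] are supported in [s] x [s], so the
   esums in their definition become finite sums over [s]. *)
Section CouplingsOnSeq.
Variables (V : choiceType) (adj : V -> V -> Prop) (R : realType).
Variables (f0 f1 : V -> R) (s : seq V).
Hypotheses (s_uniq : uniq s)
  (f0_s : forall x, f0 x != 0 -> x \in s) (f1_s : forall y, f1 y != 0 -> y \in s).

Definition supported_on (pi : V -> V -> R) : Prop :=
  forall x y, (x \notin s) || (y \notin s) -> pi x y = 0.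

Definition cost_on (pi : V -> V -> R) : R :=
  \sum_(x <- s) \sum_(y <- s) (gdist adj x y)%:R * pi x y.

Lemma supported_on_neq0 pi x y : supported_on pi -> pi x y != 0 ->
  (x \in s) && (y \in s).
Proof. by move=> pi_s; apply: contraNT; rewrite negb_and => /pi_s ->. Qed.

Lemma coupling_supported_on pi : coupling f0 f1 pi -> supported_on pi.
Proof.
by move=> pi_c x y; apply: contraTeq => /(coupling_neq0 pi_c) [/f0_s -> /f1_s ->].
Qed.

Lemma couplingP pi : (forall x y, 0 <= pi x y) -> supported_on pi ->
  coupling f0 f1 pi <->
  (forall x, \sum_(y <- s) pi x y = f0 x) /\ (forall y, \sum_(x <- s) pi x y = f1 y).
Proof.
move=> pi_ge0 pi_s.
have row x : \esum_(y in [set: V]) (pi x y)%:E = (\sum_(y <- s) pi x y)%:E.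
  by apply: esum_seq => // y /(supported_on_neq0 pi_s) /andP[].
have col y : \esum_(x in [set: V]) (pi x y)%:E = (\sum_(x <- s) pi x y)%:E.
  by apply: (esum_seq (h := pi^~ y)) => // x /(supported_on_neq0 pi_s) /andP[].
split=> [[_ pi_f0 pi_f1]|[pi_f0 pi_f1]].
  by split=> x; [move: (pi_f0 x); rewrite row|move: (pi_f1 x); rewrite col] => -[].
by split=> // x; rewrite ?row ?col ?pi_f0 ?pi_f1.
Qed.

Lemma transport_cost_onE pi : (forall x y, 0 <= pi x y) -> supported_on pi ->
  transport_cost adj pi = (cost_on pi)%:E.
Proof.
move=> pi_ge0 pi_s; rewrite /transport_cost /cost_on.
rewrite (esum_seq (s := [seq (x, y) | x <- s, y <- s])) ?big_allpairs //.
all: [> |move=> [x y]|move=> [x y] /=].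
- by apply: allpairs_uniq => // -[? ?] [? ?].
- by rewrite mulr_ge0 ?ler0n.
- rewrite mulf_eq0 negb_or => /andP[_ /(supported_on_neq0 pi_s) /andP[xs ys]].
  by apply/allpairsP; exists (x, y).
Qed.

Lemma optimal_couplingP pi : coupling f0 f1 pi ->
  optimal_coupling adj f0 f1 pi <->
  forall pi', coupling f0 f1 pi' -> cost_on pi <= cost_on pi'.
Proof.
move=> pi_c; have pi_s := coupling_supported_on pi_c.
have [pi_ge0 _ _] := pi_c.
split=> [[_ pi_opt] pi' pi'_c|pi_opt]; last split=> // pi' pi'_c.
all: have [pi'_ge0 _ _] := pi'_c; have pi'_s := coupling_supported_on pi'_c.
  by rewrite -lee_fin -!transport_cost_onE //; apply: pi_opt.
by rewrite !transport_cost_onE // lee_fin; apply: pi_opt.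
Qed.

Lemma cost_onD pi pi' :
  cost_on (fun x y => pi x y + pi' x y) = cost_on pi + cost_on pi'.
Proof.
rewrite /cost_on -big_split; apply: eq_bigr => x _.
by rewrite -big_split; apply: eq_bigr => y _; rewrite mulrDr.
Qed.

Lemma cost_onZ c pi : cost_on (fun x y => c * pi x y) = c * cost_on pi.
Proof.
rewrite /cost_on mulr_sumr; apply: eq_bigr => x _; rewrite mulr_sumr.
by apply: eq_bigr => y _; rewrite mulrCA.
Qed.

Lemma cost_onB pi pi' :
  cost_on (fun x y => pi x y - pi' x y) = cost_on pi - cost_on pi'.
Proof.
rewrite -[- _]mulN1r -cost_onZ -cost_onD /cost_on.
by under [RHS]eq_bigr do under eq_bigr do rewrite mulN1r.
Qed.

Lemma cost_on_sum (I : Type) (r : seq I) (P : I -> V -> V -> R) :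
  cost_on (fun x y => \sum_(i <- r) P i x y) = \sum_(i <- r) cost_on (P i).
Proof.
rewrite /cost_on [RHS]exchange_big; apply: eq_bigr => x _.
rewrite [RHS]exchange_big; apply: eq_bigr => y _; exact: mulr_sumr.
Qed.

Lemma optimal_coupling_mean n (P : 'I_n.+1 -> V -> V -> R) :
  (forall i, optimal_coupling adj f0 f1 (P i)) ->
  optimal_coupling adj f0 f1 (fun x y => n.+1%:R^-1 * \sum_i P i x y).
Proof.
move=> P_opt; set Pm := fun x y => _.
have P_c i : coupling f0 f1 (P i) by have [] := P_opt i.
have P_ge0 i x y : 0 <= P i x y by have [] := P_c i.
have P_s i := coupling_supported_on (P_c i).
have mean_const (F : 'I_n.+1 -> R) c :
    (forall i, F i = c) -> n.+1%:R^-1 * \sum_i F i = c.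
  move=> Fc; rewrite (eq_bigr _ (fun i _ => Fc i)) sumr_const card_ord.
  by rewrite -[c *+ _]mulr_natl mulKf ?pnatr_eq0.
have Pm_c : coupling f0 f1 Pm.
  apply/couplingP => [x y||].
  - by rewrite mulr_ge0 ?sumr_ge0 // invr_ge0.
  - by move=> x y xy; rewrite /Pm big1 ?mulr0 // => i _; apply: P_s.
  have P_marg i := (couplingP (P_ge0 i) (P_s i)).1 (P_c i).
  split=> [x|y]; rewrite /Pm -mulr_sumr exchange_big /=; apply: mean_const => i.
    exact: (P_marg i).1.
  exact: (P_marg i).2.
apply/(optimal_couplingP Pm_c) => pi' pi'_c.
rewrite /Pm cost_onZ cost_on_sum -[cost_on pi'](mean_const (fun=> cost_on pi')) //.
rewrite ler_pM2l ?invr_gt0 // ler_sum // => i _.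
exact: (proj1 (optimal_couplingP (P_c i)) (P_opt i)).
Qed.

Definition point_mass (a b : V) (x y : V) : R := ((x == a) && (y == b))%:R.

Section PointMass.
Variables (a b : V).
Hypotheses (a_s : a \in s) (b_s : b \in s).

Lemma point_massE x y : point_mass a b x y = (x == a)%:R * (y == b)%:R.
Proof. by rewrite /point_mass -natrM mulnb. Qed.

Lemma point_mass_ge0 x y : 0 <= point_mass a b x y.
Proof. exact: ler0n. Qed.

Lemma supported_on_point_mass : supported_on (point_mass a b).
Proof.
move=> x y; rewrite /point_mass; apply: contraTeq.
by rewrite pnatr_eq0 eqb0 negbK => /andP[/eqP-> /eqP->]; rewrite a_s b_s.
Qed.

Lemma sum_point_mass_row x : \sum_(y <- s) point_mass a b x y = (x == a)%:R.
Proof.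
under eq_bigr do rewrite point_massE mulrC.
by rewrite sum_seq_indicator // mul1r.
Qed.

Lemma sum_point_mass_col y : \sum_(x <- s) point_mass a b x y = (y == b)%:R.
Proof. by under eq_bigr do rewrite point_massE; rewrite sum_seq_indicator // mul1r. Qed.

Lemma cost_on_point_mass : cost_on (point_mass a b) = (gdist adj a b)%:R.
Proof.
have row x : \sum_(y <- s) (gdist adj x y)%:R * point_mass a b x y =
    (x == a)%:R * (gdist adj x b)%:R.
  rewrite -(sum_seq_indicator (fun y => (gdist adj x y)%:R) s_uniq b_s) mulr_sumr.
  by apply: eq_bigr => y _; rewrite point_massE; ring.
by rewrite /cost_on (eq_bigr _ (fun x _ => row x)) sum_seq_indicator.
Qed.

End PointMass.

Section CycleShift.
Variables (n : nat) (X Y : 'I_n -> V).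

Definition cycle_shift (x y : V) : R :=
  \sum_i (point_mass (X (ordS i)) (Y i) x y - point_mass (X i) (Y i) x y).

Hypotheses (X_s : forall i, X i \in s) (Y_s : forall i, Y i \in s).

Lemma supported_on_cycle_shift : supported_on cycle_shift.
Proof.
move=> x y xy; rewrite /cycle_shift big1 // => i _.
by rewrite !supported_on_point_mass ?subrr.
Qed.

Lemma sum_cycle_shift_row x : \sum_(y <- s) cycle_shift x y = 0.
Proof.
rewrite exchange_big /=; under eq_bigr do rewrite sumrB !sum_point_mass_row //.
by rewrite sumrB [X in _ - X](reindex_inj (@ordS_inj n)) subrr.
Qed.

Lemma sum_cycle_shift_col y : \sum_(x <- s) cycle_shift x y = 0.
Proof.
rewrite exchange_big big1 //= => i _.
by rewrite sumrB !sum_point_mass_col ?subrr.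
Qed.

Lemma cost_on_cycle_shift : cost_on cycle_shift =
  \sum_i ((gdist adj (X (ordS i)) (Y i))%:R - (gdist adj (X i) (Y i))%:R).
Proof.
by rewrite cost_on_sum; apply: eq_bigr => i _; rewrite cost_onB !cost_on_point_mass.
Qed.

Lemma cycle_shift_ge x y : - \sum_i point_mass (X i) (Y i) x y <= cycle_shift x y.
Proof.
by rewrite /cycle_shift sumrB addrC lerDl sumr_ge0 // => i _; apply: point_mass_ge0.
Qed.

End CycleShift.

Lemma optimal_coupling_cyclically_monotone pi n (X Y : 'I_n -> V) :
  optimal_coupling adj f0 f1 pi -> (forall i, 0 < pi (X i) (Y i)) ->
  \sum_i (gdist adj (X i) (Y i))%:R <= \sum_i (gdist adj (X (ordS i)) (Y i))%:R :> R.
Proof.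
case: n X Y => [|n] X Y pi_opt pi_XY; first by rewrite !big_ord0.
have [pi_c _] := pi_opt; have [pi_ge0 _ _] := pi_c.
have pi_s := coupling_supported_on pi_c.
have /all_and2 [X_s Y_s] i : X i \in s /\ Y i \in s.
  by apply/andP/(supported_on_neq0 pi_s); rewrite gt_eqF.
(* With n.+1 * e below every pi (X i) (Y i), removing e from each (X i, Y i)
   (with multiplicity) keeps the shifted coupling nonnegative. *)
pose e := n.+1%:R^-1 * \big[Num.min/1]_i pi (X i) (Y i).
have e_gt0 : 0 < e by rewrite mulr_gt0 ?invr_gt0 ?ltr0n //; apply: lt_bigmin.
pose pi' x y := pi x y + e * cycle_shift X Y x y.
have pi'_ge0 x y : 0 <= pi' x y.
  have mass_le : e * \sum_i point_mass (X i) (Y i) x y <= pi x y.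
    apply: (@le_trans _ _ (\sum_(i < n.+1) n.+1%:R^-1 * pi x y)).
      rewrite mulr_sumr; apply: ler_sum => i _; rewrite /point_mass.
      case: andP => [[/eqP-> /eqP->]|_]; last by rewrite mulr0 mulr_ge0 ?invr_ge0.
      by rewrite mulr1 ler_pM2l ?invr_gt0 ?ltr0n // bigmin_le.
    rewrite sumr_const card_ord -[_ *+ _]mulr_natl mulrA.
    by rewrite mulfV ?mul1r ?pnatr_eq0.
  have := cycle_shift_ge X Y x y; rewrite -(ler_pM2l e_gt0) mulrN.
  by rewrite /pi'; lra.
have pi'_c : coupling f0 f1 pi'.
  have [row col] := (couplingP pi_ge0 pi_s).1 pi_c.
  apply/couplingP => // [x y xy|].
    by rewrite /pi' pi_s // supported_on_cycle_shift // mulr0 addr0.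
  split=> [x|y]; rewrite /pi' big_split -mulr_sumr /=.
    by rewrite row sum_cycle_shift_row // mulr0 addr0.
  by rewrite col sum_cycle_shift_col // mulr0 addr0.
have := (optimal_couplingP pi_c).1 pi_opt pi' pi'_c.
rewrite /pi' cost_onD cost_onZ cost_on_cycle_shift //.
by rewrite lerDl pmulr_rge0 // sumrB subr_ge0.
Qed.

End CouplingsOnSeq.

Lemma W1_support_cyclically_monotone (V : choiceType) (adj : V -> V -> Prop)
    (R : realType) (f0 f1 : V -> R) n (X Y : 'I_n -> V) :
  fin_supp f0 -> fin_supp f1 -> (forall i, W1_support adj f0 f1 (X i) (Y i)) ->
  (\sum_i gdist adj (X i) (Y i) <= \sum_i gdist adj (X (ordS i)) (Y i))%N.
Proof.
move=> /finite_seqP [s0 supp0] /finite_seqP [s1 supp1] XY_supp.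
pose s := undup (s0 ++ s1).
have f0_s x : f0 x != 0 -> x \in s.
  move=> f0x; have : [set x | f0 x != 0] x by [].
  by rewrite supp0 mem_undup mem_cat => ->.
have f1_s x : f1 x != 0 -> x \in s.
  move=> f1x; have : [set x | f1 x != 0] x by [].
  by rewrite supp1 mem_undup mem_cat orbC => ->.
case: n X Y XY_supp => [|n] X Y XY_supp; first by rewrite !big_ord0.
have [P /all_and2 [P_opt P_XY]] := fin_all_exists XY_supp.
rewrite -(ler_nat R) !natr_sum.
apply: (optimal_coupling_cyclically_monotone (undup_uniq _) f0_s f1_s
  (optimal_coupling_mean (undup_uniq _) f0_s f1_s P_opt)) => i.
rewrite mulr_gt0 ?invr_gt0 ?ltr0n //; apply: lt_le_trans (P_XY i) _.
by rewrite (bigD1 i) //= lerDl sumr_ge0 // => j _; have [[]] := P_opt j.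
Qed.

Lemma W1_arrow_on_geodesic (V : choiceType) (adj : V -> V -> Prop) (R : realType)
    (f0 f1 : V -> R) x y :
  W1_arrow adj f0 f1 x y -> exists a b,
    W1_support adj f0 f1 a b /\ (gdist adj a x + gdist adj y b < gdist adj a b)%N.
Proof.
move=> [_ [h [m [[ph hm] [h_supp [k [km [hk hk1]]]]]]]].
exists (h 0%N), (h m); split=> //; rewrite -hm -hk -hk1.
by have := gdist_prefix ph (ltnW km); have := gdist_suffix ph km; lia.
Qed.

Theorem theorem2p13 (V : choiceType) (adj : V -> V -> Prop) (R : realType)
    (f0 f1 : V -> R) :
  simple_graph adj -> connected_graph adj -> locally_finite adj ->
  prob_distr f0 -> prob_distr f1 -> fin_supp f0 -> fin_supp f1 ->
  forall (g : nat -> V) (n : nat),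
    oriented_path adj f0 f1 g n -> geodesic adj g n.
Proof.
move=> _ conn _ _ _ f0_fin f1_fin g n [pg arrow]; split=> //.
apply/eqP; rewrite eqn_leq gdist_min // andbT.
case: n pg arrow => [//|n] pg arrow.
have XY_ex (i : 'I_n.+1) : exists ab : V * V, W1_support adj f0 f1 ab.1 ab.2 /\
    (gdist adj ab.1 (g i) + gdist adj (g i.+1) ab.2 < gdist adj ab.1 ab.2)%N.
  by have [a [b ab]] := W1_arrow_on_geodesic (arrow i (ltn_ord i)); exists (a, b).
have [XY /all_and2 [XY_supp XY_lt]] := fin_all_exists XY_ex.
pose X i := (XY i).1; pose Y i := (XY i).2.
pose A i := gdist adj (X i) (g i); pose B (i : 'I_n.+1) := gdist adj (g i.+1) (Y i).
have lower : (\sum_i (A i + B i + 1) <= \sum_i gdist adj (X i) (Y i))%N.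
  by apply: leq_sum => i _; rewrite addn1; exact: XY_lt.
have upper : (\sum_i gdist adj (X (ordS i)) (Y i) <=
    \sum_i (A (ordS i) + gdist adj (g (ordS i)) (g i.+1) + B i))%N.
  apply: leq_sum => i _; apply: leq_trans (gdist_triangle _ (g (ordS i)) _ conn) _.
  by rewrite -addnA leq_add2l gdist_triangle.
have cyclic : (\sum_(i < n.+1) gdist adj (X i) (Y i) <=
    \sum_(i < n.+1) gdist adj (X (ordS i)) (Y i))%N.
  exact: W1_support_cyclically_monotone f0_fin f1_fin XY_supp.
have sumA : (\sum_(i < n.+1) A (ordS i) = \sum_(i < n.+1) A i)%N.
  by rewrite [RHS](reindex_inj (@ordS_inj _)).
rewrite !big_split /= sum1_card card_ord sum_gdist_ordS sumA in lower upper.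
have := leq_trans lower (leq_trans cyclic upper).
by rewrite [X in (_ <= X)%N]addnAC leq_add2l.
Qed.
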